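(* Let $\mathcal{X}$ be a countable set and $\pi$ a probability distribution on $\mathcal{X}$. Let $\mathcal{X}_1,\dots,\mathcal{X}_n\subset\mathcal{X}$ with $\bigcup_{i=1}^n\mathcal{X}_i=\mathcal{X}$, and for each $i$ let $Q_i$ be a Markov kernel defined on $\mathcal{X}_i$. Let $S_1,\dots,S_n:\mathcal{X}\to\mathcal{X}$ be $\pi$-invariant involutions, and let $\omega=(\omega_1,\dots,\omega_n):\mathcal{X}\to\Delta^{n-1}$ (the standard simplex $\{y\in\mathbb{R}^n:y_i\ge0,\sum_i y_i=1\}$) satisfy: (C1) $\omega_i(x)>0$ if and only if $x\in\mathcal{X}_i$, for $i=1,\dots,n$; (C2) $\omega_i(x)>0$ and $Q_i(x,x')>0$ if and only if $\omega_i(x')>0$ and $Q_i(S_i(x'),S_i(x))>0$; (C3) $\omega_i(S_i(x))=\omega_i(x)$ for all $x$ and all $i$. Then the Mixed Skew Metropolis–Hastings Markov chain (defined in the context) has $\pi$ as an invariant measure.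
   Context: The Mixed Skew Metropolis–Hastings (MSMH) chain is defined by the following transition from a current state $x$: sample an index $i$ with probability $\omega_i(x)$; sample a proposal $x'\sim Q_i(x,\cdot)$; compute $$r_i(x,x')=\frac{\pi(x')\,\omega_i(S_i(x'))\,Q_i(S_i(x'),S_i(x))}{\pi(x)\,\omega_i(x)\,Q_i(x,x')};$$ sample $u$ uniformly on $[0,1]$; if $u<r_i(x,x')$ the next state is $x'$, otherwise the next state is $S_i(x)$. A $\pi$-invariant involution is a map $S$ with $S\circ S=\mathrm{id}$ and $\pi(S(A))=\pi(A)$ for all $A\subset\mathcal{X}$. *)

From HB Require Import structures.
From mathcomp Require Import all_boot all_order all_algebra.
From mathcomp Require Import all_classical all_reals.
From mathcomp Require Import ereal esum.
Set Implicit Arguments. Unset Strict Implicit. Unset Printing Implicit Defensive.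
Import Order.TTheory GRing.Theory Num.Theory.
Local Open Scope classical_set_scope.
Local Open Scope ring_scope.

(* Acceptance ratio r_i(x,x') of the MSMH chain (MathComp convention a/0 = 0). *)
Definition msmh_ratio (R : realType) (T : countType) (n : nat)
  (pi : T -> R) (omega : 'I_n -> T -> R) (Q : 'I_n -> T -> T -> R)
  (S : 'I_n -> T -> T) (i : 'I_n) (x x' : T) : R :=
  (pi x' * omega i (S i x') * Q i (S i x') (S i x)) /
  (pi x * omega i x * Q i x x').

(* Probability of accepting: P(u < r) for u ~ Unif[0,1], i.e. min(1, r). *)
Definition msmh_accept (R : realType) (T : countType) (n : nat)
  (pi : T -> R) (omega : 'I_n -> T -> R) (Q : 'I_n -> T -> T -> R)
  (S : 'I_n -> T -> T) (i : 'I_n) (x x' : T) : R :=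
  Num.min 1 (msmh_ratio pi omega Q S i x x').

Definition msmh_kernel (R : realType) (T : countType) (n : nat)
  (pi : T -> R) (omega : 'I_n -> T -> R) (Q : 'I_n -> T -> T -> R)
  (S : 'I_n -> T -> T) (x y : T) : \bar R :=
  (\sum_(i < n) (omega i x)%:E *
     \esum_(x' in [set: T])
       (Q i x x' * (msmh_accept pi omega Q S i x x' * (x' == y)%:R
          + (1 - msmh_accept pi omega Q S i x x') * (S i x == y)%:R))%:E)%E.

Definition pi_invariant_involution (R : realType) (T : countType)
  (pi : T -> R) (S : T -> T) : Prop :=
  (forall x, S (S x) = x) /\
  (forall A : set T, \esum_(x in S @` A) (pi x)%:E = \esum_(x in A) (pi x)%:E).

From HB Require Import structures.
From mathcomp Require Import all_boot all_order all_algebra.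
From mathcomp Require Import all_classical all_reals.
From mathcomp Require Import ereal esum ring.
Set Implicit Arguments. Unset Strict Implicit. Unset Printing Implicit Defensive.
Import Order.TTheory GRing.Theory Num.Theory.
Local Open Scope classical_set_scope.
Local Open Scope ring_scope.

(* Write f_i(x,x') = pi(x) w_i(x) Q_i(x,x') for the proposal flow and h_i(x,x')
   for the numerator of r_i(x,x'), so that r_i = h_i / f_i.  The flow accepted
   along x -> x' is f_i min(1, h_i/f_i) = min(f_i, h_i), also when f_i = 0
   because a/0 = 0.  Since S_i is an involution
   preserving pi, (x,x') |-> (S_i x', S_i x) swaps f_i and h_i, so the accepted
   flow satisfies the skew balance min(f_i, h_i)(x,x') = min(f_i, h_i)(S_i x', S_i x).
   Into y flow the accepted moves x -> y and the rejected proposals from S_i y.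
   Reindexing the former by x = S_i x' turns them into the accepted moves out of
   S_i y, so together they make up the whole proposal flow out of S_i y, namely
   pi(S_i y) w_i(S_i y) = pi(y) w_i(y) by (C3).  Summing over i gives pi(y). *)

Lemma ge0_esumZl (R : realType) (T : choiceType) (D : set T) (c : R)
    (a : T -> \bar R) :
  0 <= c -> (forall x, (0 <= a x)%E) ->
  (\esum_(x in D) (c%:E * a x) = c%:E * \esum_(x in D) a x)%E.
Proof.
move=> c0 a0; rewrite /esum -ereal_supZl//; last first.
  by apply/set0P; exists (\sum_(x \in set0) a x)%E; exists set0 => //; exact: fsets_set0.
congr ereal_sup; apply/seteqP; split => z /=.
- move=> [F [finF FD] <-]; exists (\sum_(x \in F) a x)%E; first by exists F.
  by rewrite !fsbig_finite// ge0_sume_distrr.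
- move=> [_ [F [finF FD] <-] <-]; exists F => //.
  by rewrite !fsbig_finite// ge0_sume_distrr.
Qed.

Lemma esumT_supp1 (R : realType) (T : choiceType) (t : T) (a : T -> \bar R) :
  (forall x, x != t -> a x = 0%E) -> (0 <= a t)%E ->
  (\esum_(x in [set: T]) a x = a t)%E.
Proof.
move=> a0 at0; rewrite -(esum_set1 at0) [RHS]esum_mkcond; apply: eq_esum => x _.
have [->|xt] := eqVneq x t; first by rewrite mem_set.
by rewrite a0 // memNset //=; exact/eqP.
Qed.

Lemma mulr_min1_div (R : realFieldType) (f h : R) : 0 <= f -> 0 <= h ->
  f * Num.min 1 (h / f) = Num.min f h.
Proof.
move=> f0 h0; have [->|fn0] := eqVneq f 0; first by rewrite mul0r min_l.
by rewrite minr_pMr // mulr1 mulrCA mulfV // mulr1.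
Qed.

Lemma pi_invariant_involutionK (R : realType) (T : countType) (pi : T -> R)
    (S : T -> T) :
  pi_invariant_involution pi S -> involutive S.
Proof. by case. Qed.

Lemma pi_invariant_involution_eq (R : realType) (T : countType) (pi : T -> R)
    (S : T -> T) :
  (forall x, 0 <= pi x) -> pi_invariant_involution pi S -> forall x, pi (S x) = pi x.
Proof.
move=> pi_ge0 [_ piS] x; have := piS [set x].
by rewrite image_set1 !esum_set1 ?lee_fin //; case.
Qed.

Section MSMHBalance.
Variables (R : realType) (T : countType) (n : nat).
Variables (pi : T -> R) (omega : 'I_n -> T -> R) (Q : 'I_n -> T -> T -> R).
Variable S : 'I_n -> T -> T.
Hypothesis pi_ge0 : forall x, 0 <= pi x.
Hypothesis omega_ge0 : forall i x, 0 <= omega i x.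
Hypothesis Q_ge0 : forall i x x', 0 <= Q i x x'.

Definition proposal_flow i x x' := pi x * omega i x * Q i x x'.

Definition reverse_flow i x x' := pi x' * omega i (S i x') * Q i (S i x') (S i x).

Definition accepted_flow i x x' := Num.min (proposal_flow i x x') (reverse_flow i x x').

Definition transition_flow i y x x' :=
  accepted_flow i x x' * (x' == y)%:R
  + (proposal_flow i x x' - accepted_flow i x x') * (S i x == y)%:R.

Lemma proposal_flow_ge0 i x x' : 0 <= proposal_flow i x x'.
Proof. by rewrite !mulr_ge0. Qed.

Lemma accepted_flow_ge0 i x x' : 0 <= accepted_flow i x x'.
Proof. by rewrite le_min proposal_flow_ge0 !mulr_ge0. Qed.

Lemma accepted_flow_le i x x' : accepted_flow i x x' <= proposal_flow i x x'.
Proof. by rewrite ge_min lexx. Qed.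

Lemma proposal_flow_accept i x x' :
  proposal_flow i x x' * msmh_accept pi omega Q S i x x' = accepted_flow i x x'.
Proof. by rewrite mulr_min1_div ?proposal_flow_ge0 ?mulr_ge0. Qed.

Lemma transition_flow_ge0 i y x x' : 0 <= transition_flow i y x x'.
Proof.
by rewrite addr_ge0 ?mulr_ge0 ?accepted_flow_ge0 ?subr_ge0 ?accepted_flow_le.
Qed.

Lemma weighted_kernelE x y :
  ((pi x)%:E * msmh_kernel pi omega Q S x y =
   \sum_(i < n) \esum_(x' in [set: T]) (transition_flow i y x x')%:E)%E.
Proof.
have accept_ge0 i x' : 0 <= msmh_accept pi omega Q S i x x'.
  by rewrite le_min ler01 divr_ge0 ?proposal_flow_ge0 ?mulr_ge0.
have accept_le1 i x' : msmh_accept pi omega Q S i x x' <= 1 by rewrite ge_min lexx.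
rewrite /msmh_kernel ge0_sume_distrr; last first.
  move=> i _; rewrite mule_ge0 ?lee_fin // esum_ge0 // => x' _.
  by rewrite lee_fin !mulr_ge0 ?addr_ge0 ?mulr_ge0 ?subr_ge0.
apply: eq_bigr => i _; rewrite muleA -EFinM -ge0_esumZl ?mulr_ge0 //; last first.
  by move=> x'; rewrite lee_fin !mulr_ge0 ?addr_ge0 ?mulr_ge0 ?subr_ge0.
apply: eq_esum => x' _; rewrite -EFinM; congr (_%:E).
rewrite /transition_flow -proposal_flow_accept /proposal_flow.
set a := msmh_accept _ _ _ _ _ _ _.
by set b := (x' == y)%:R; set c := (S i x == y)%:R; ring.
Qed.

Lemma esum_transition_flow i y x :
  (\esum_(x' in [set: T]) (transition_flow i y x x')%:E =
   (accepted_flow i x y)%:E +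
   (if S i x == y
    then \esum_(x' in [set: T]) (proposal_flow i x x' - accepted_flow i x x')%:E
    else 0))%E.
Proof.
rewrite (eq_esum (fun x' _ => EFinD _ _)) esumD; first last.
- by move=> x' _; rewrite lee_fin mulr_ge0 ?subr_ge0 ?accepted_flow_le.
- by move=> x' _; rewrite lee_fin mulr_ge0 ?accepted_flow_ge0.
congr (_ + _)%E.
  rewrite (@esumT_supp1 _ _ y); first by rewrite eqxx mulr1.
    by move=> x' /negbTE ->; rewrite mulr0.
  by rewrite lee_fin mulr_ge0 ?accepted_flow_ge0.
case: eqP => _; first by apply: eq_esum => x' _; rewrite mulr1.
by rewrite esum1 // => x' _; rewrite mulr0.
Qed.

Hypothesis S_invol : forall i, involutive (S i).
Hypothesis pi_S : forall i x, pi (S i x) = pi x.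
Hypothesis omega_S : forall i x, omega i (S i x) = omega i x.

Lemma accepted_flow_skew i x x' :
  accepted_flow i (S i x') (S i x) = accepted_flow i x x'.
Proof.
by rewrite /accepted_flow /proposal_flow /reverse_flow !S_invol !pi_S minC.
Qed.

Lemma esum_accepted_flow_out i y :
  (\esum_(x' in [set: T]) (accepted_flow i (S i y) x')%:E =
   \esum_(x in [set: T]) (accepted_flow i x y)%:E)%E.
Proof.
rewrite (reindex_esum [set: T] [set: T] (S i)); last first.
  split => //= [a b _ _|b _]; first exact: (can_inj (S_invol i)).
  by exists (S i b) => //; exact: S_invol.
by apply: eq_esum => x' _; rewrite accepted_flow_skew.
Qed.

Hypothesis Q_sum1 : forall i x, 0 < omega i x ->
  (\esum_(x' in [set: T]) (Q i x x')%:E = 1)%E.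

Lemma esum_proposal_flow i x :
  (\esum_(x' in [set: T]) (proposal_flow i x x')%:E = (pi x * omega i x)%:E)%E.
Proof.
under eq_esum do rewrite /proposal_flow EFinM.
rewrite ge0_esumZl ?mulr_ge0 //; last by move=> x'; rewrite lee_fin.
have [w0|wn0] := eqVneq (omega i x) 0; first by rewrite w0 mulr0 mul0e.
by rewrite Q_sum1 ?mule1 // lt_neqAle eq_sym wn0 omega_ge0.
Qed.

Lemma esum_transition_flow_into i y :
  (\esum_(x in [set: T]) \esum_(x' in [set: T]) (transition_flow i y x x')%:E =
   (pi y * omega i y)%:E)%E.
Proof.
rewrite (eq_esum (fun x _ => esum_transition_flow i y x)) esumD; first last.
- move=> x _; case: ifP => // _; rewrite esum_ge0 // => x' _.
  by rewrite lee_fin subr_ge0 accepted_flow_le.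
- by move=> x _; rewrite lee_fin accepted_flow_ge0.
rewrite [X in (_ + X)%E](@esumT_supp1 _ _ (S i y)); first last.
- rewrite S_invol eqxx esum_ge0 // => x' _.
  by rewrite lee_fin subr_ge0 accepted_flow_le.
- by move=> x xSy; case: eqP => // Sxy; case/eqP: xSy; rewrite -Sxy S_invol.
rewrite S_invol eqxx -esum_accepted_flow_out -esumD; first last.
- by move=> x' _; rewrite lee_fin subr_ge0 accepted_flow_le.
- by move=> x' _; rewrite lee_fin accepted_flow_ge0.
under eq_esum do rewrite -EFinD addrC subrK.
by rewrite esum_proposal_flow pi_S omega_S.
Qed.

End MSMHBalance.

Theorem theorem4p2 (R : realType) (T : countType) (n : nat)
  (pi : T -> R) (X : 'I_n -> set T) (Q : 'I_n -> T -> T -> R)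
  (S : 'I_n -> T -> T) (omega : 'I_n -> T -> R)
  (pi_ge0 : forall x, 0 <= pi x)
  (pi_sum1 : (\esum_(x in [set: T]) (pi x)%:E = 1)%E)
  (X_cover : \bigcup_(i in [set: 'I_n]) X i = [set: T])
  (Q_ge0 : forall i x x', 0 <= Q i x x')
  (Q_sum1 : forall i x, X i x -> (\esum_(x' in [set: T]) (Q i x x')%:E = 1)%E)
  (S_inv : forall i, pi_invariant_involution pi (S i))
  (omega_ge0 : forall i x, 0 <= omega i x)
  (omega_sum1 : forall x, \sum_(i < n) omega i x = 1)
  (C1 : forall i x, 0 < omega i x <-> X i x)
  (C2 : forall i x x', (0 < omega i x /\ 0 < Q i x x') <->
                       (0 < omega i x' /\ 0 < Q i (S i x') (S i x)))
  (C3 : forall i x, omega i (S i x) = omega i x) :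
  forall y : T,
    (\esum_(x in [set: T]) (pi x)%:E * msmh_kernel pi omega Q S x y)%E = (pi y)%:E.
Proof.
move=> y.
have S_invol i := pi_invariant_involutionK (S_inv i).
have pi_S i := pi_invariant_involution_eq pi_ge0 (S_inv i).
have Q_mass i x (wx : 0 < omega i x) := Q_sum1 i x (proj1 (C1 i x) wx).
rewrite (eq_esum (fun x _ => weighted_kernelE S pi_ge0 omega_ge0 Q_ge0 x y)).
rewrite esum_sum; last first.
  move=> x i _ _; apply: esum_ge0 => x' _.
  by rewrite lee_fin; exact: transition_flow_ge0.
have -> : (pi y)%:E = (\sum_(i < n) (pi y * omega i y)%:E)%E.
  by rewrite sumEFin -mulr_sumr omega_sum1 mulr1.
apply: eq_bigr => i _.
exact: (esum_transition_flow_into pi_ge0 omega_ge0 Q_ge0 S_invol pi_S C3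
  Q_mass i y).
Qed.
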